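(* Let $T$ be a complete first-order theory in a countable language with an uncountable atomic model. Suppose $\delta(x)$ is a complete formula in one variable that is not pseudo-algebraic. Then for every countable atomic model $N$ and every finite tuple $\mathbf e\subseteq N$, there are $M\preceq N$ and $c\in N\setminus M$ such that $\mathbf e\subseteq M$ and $N\models\delta(c)$.
   Context: A complete formula is one isolating a complete type over $\emptyset$ realized in an atomic model. A complete formula $\phi(x,\mathbf a)$ in one variable is pseudo-algebraic if for some/any countable atomic $M$ containing $\mathbf a$ and any atomic $N\succeq M$ with $N\neq M$, $\phi(N,\mathbf a)=\phi(M,\mathbf a)$. *)

From mathcomp Require Import all_boot.

Set Implicit Arguments.
Unset Strict Implicit.
Unset Printing Implicit Defensive.

Record Lang := {
  Fn : Type;
  fn_ar : Fn -> nat;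
  Rl : Type;
  rl_ar : Rl -> nat }.

Definition countable (X : Type) : Prop := exists f : X -> nat, injective f.

Definition countable_lang (L : Lang) : Prop :=
  countable (Fn L) /\ countable (Rl L).

Inductive term (L : Lang) : Type :=
| Var : nat -> term L
| App : forall f : Fn L, ('I_(fn_ar f) -> term L) -> term L.

Inductive formula (L : Lang) : Type :=
| Equ : term L -> term L -> formula L
| Rel : forall r : Rl L, ('I_(rl_ar r) -> term L) -> formula L
| Neg : formula L -> formula L
| And : formula L -> formula L -> formula L
| Ex  : nat -> formula L -> formula L.   (* Ex k φ = ∃ x_k φ *)

Arguments Var {L}.

Definition Imp (L : Lang) (p q : formula L) : formula L := Neg (And p (Neg q)).

Fixpoint tfree (L : Lang) (P : nat -> Prop) (t : term L) : Prop :=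
  match t with
  | Var n => P n
  | App f a => forall i, tfree P (a i)
  end.

Fixpoint ffree (L : Lang) (P : nat -> Prop) (p : formula L) : Prop :=
  match p with
  | Equ t u => tfree P t /\ tfree P u
  | Rel r a => forall i, tfree P (a i)
  | Neg q => ffree P q
  | And q1 q2 => ffree P q1 /\ ffree P q2
  | Ex k q => ffree (fun j => j = k \/ P j) q
  end.

Definition sentence (L : Lang) (p : formula L) : Prop := ffree (fun _ => False) p.

Definition formula_in (L : Lang) (n : nat) (p : formula L) : Prop :=
  ffree (fun j => j < n) p.

Record structure (L : Lang) := {
  dom :> Type;
  dom_inh : dom;
  interp_fn : forall f : Fn L, ('I_(fn_ar f) -> dom) -> dom;
  interp_rl : forall r : Rl L, ('I_(rl_ar r) -> dom) -> Prop }.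

Fixpoint eval (L : Lang) (M : structure L) (s : nat -> M) (t : term L) : M :=
  match t with
  | Var n => s n
  | App f a => @interp_fn L M f (fun i => eval s (a i))
  end.

Definition upd (X : Type) (s : nat -> X) (k : nat) (x : X) : nat -> X :=
  fun j => if j == k then x else s j.

Fixpoint sat (L : Lang) (M : structure L) (s : nat -> M) (p : formula L) : Prop :=
  match p with
  | Equ t u => eval s t = eval s u
  | Rel r a => @interp_rl L M r (fun i => eval s (a i))
  | Neg q => ~ sat s q
  | And q1 q2 => sat s q1 /\ sat s q2
  | Ex k q => exists x : M, sat (upd s k x) q
  end.

Definition theory (L : Lang) := formula L -> Prop.

Definition is_model (L : Lang) (T : theory L) (M : structure L) : Prop :=
  forall p, T p -> forall s : nat -> M, sat s p.

Definition entails (L : Lang) (T : theory L) (p : formula L) : Prop :=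
  forall M : structure L, is_model T M -> forall s : nat -> M, sat s p.

Definition complete_theory (L : Lang) (T : theory L) : Prop :=
  (forall p, T p -> sentence p) /\
  (exists M : structure L, is_model T M) /\
  (forall p, sentence p -> entails T p \/ entails T (Neg p)).

Definition isolating (L : Lang) (T : theory L) (n : nat) (p : formula L) : Prop :=
  formula_in n p /\
  (exists (M : structure L) (s : nat -> M), is_model T M /\ sat s p) /\
  (forall q, formula_in n q -> entails T (Imp p q) \/ entails T (Imp p (Neg q))).

Definition atomic (L : Lang) (T : theory L) (M : structure L) : Prop :=
  is_model T M /\
  forall (n : nat) (s : nat -> M), exists p, isolating T n p /\ sat s p.

Definition complete_formula (L : Lang) (T : theory L) (n : nat) (p : formula L) : Prop :=
  isolating T n p /\
  exists (M : structure L) (s : nat -> M), atomic T M /\ sat s p.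

(** elementary embeddings (M ≼ N up to the identification of M with h(M)) *)
Definition elem_emb (L : Lang) (M N : structure L) (h : M -> N) : Prop :=
  injective h /\ forall (p : formula L) (s : nat -> M), sat s p <-> sat (h \o s) p.

Definition realizes1 (L : Lang) (N : structure L) (c : N) (p : formula L) : Prop :=
  sat (fun _ => c) p.

(** pseudo-algebraic, for a parameter-free complete formula in one variable,
    using the "any" reading of "some/any" *)
Definition pseudo_algebraic1 (L : Lang) (T : theory L) (d : formula L) : Prop :=
  forall (M N : structure L) (h : M -> N),
    countable M -> atomic T M -> atomic T N -> elem_emb h ->
    ~ (forall y : N, exists x : M, h x = y) ->
    forall c : N, realizes1 c d -> exists m : M, h m = c.

From Stdlib Require List.
From mathcomp Require Import all_boot.
From Stdlib Require Import Classical ClassicalEpsilon FunctionalExtensionality.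
From mathcomp Require Import zify.

Set Implicit Arguments.
Unset Strict Implicit.
Unset Printing Implicit Defensive.

(* Failure of pseudo-algebraicity yields h : M ≼ N' with M countable, M and N' atomic,
   and c in N' \ h(M) realizing δ.  Since N is atomic, the tuple e has its type realized
   in M.  Since N' is atomic, every finite tuple of N' has an isolated type, so an
   enumeration of h(M) ∪ {c} that starts with that realization of e's type can be sent
   into N one element at a time, preserving types, with the start sent to e itself.
   The resulting map is elementary on M, its range contains e, and the image of c
   realizes δ outside it. *)

Section Syntax.
Variable L : Lang.

Lemma tfree_mono (P Q : nat -> Prop) (t : term L) :
  (forall j, P j -> Q j) -> tfree P t -> tfree Q t.
Proof. by move=> PQ; elim: t => [n|f a IH] /=; [exact: PQ | move=> H i; apply: IH]. Qed.

Lemma ffree_mono (q : formula L) : forall P Q : nat -> Prop,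
  (forall j, P j -> Q j) -> ffree P q -> ffree Q q.
Proof.
elim: q => [t u|r a|q IH|q1 IH1 q2 IH2|k q IH] P Q PQ /=.
- by case=> H1 H2; split; apply: tfree_mono PQ _.
- by move=> H i; apply: tfree_mono (H i).
- exact: IH.
- by case=> H1 H2; split; [apply: IH1 PQ H1 | apply: IH2 PQ H2].
- by apply: IH => j [->|Pj]; [left | right; apply: PQ].
Qed.

Lemma term_bound (t : term L) : exists b, tfree (fun j => j < b) t.
Proof.
elim: t => [n|f a IH]; first by exists n.+1 => /=.
have [g Hg] := fin_all_exists IH.
exists (\max_(i < fn_ar f) g i) => /= i; apply: tfree_mono (Hg i) => j Hj.
exact: leq_trans Hj (leq_bigmax i).
Qed.

Lemma formula_bound (q : formula L) : exists b, formula_in b q.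
Proof.
rewrite /formula_in; elim: q => [t u|r a|q IH|q1 IH1 q2 IH2|k q IH].
- have [b1 H1] := term_bound t; have [b2 H2] := term_bound u.
  by exists (maxn b1 b2); split; [apply: tfree_mono H1 | apply: tfree_mono H2] => j; lia.
- have [g Hg] := fin_all_exists (fun i => term_bound (a i)).
  exists (\max_(i < rl_ar r) g i) => /= i; apply: tfree_mono (Hg i) => j Hj.
  exact: leq_trans Hj (leq_bigmax i).
- exact: IH.
- have [b1 H1] := IH1; have [b2 H2] := IH2.
  by exists (maxn b1 b2); split; [apply: ffree_mono H1 | apply: ffree_mono H2] => j; lia.
- by have [b H] := IH; exists b; apply: ffree_mono H => j Hj; right.
Qed.

Lemma eval_ext (M : structure L) (P : nat -> Prop) (s s' : nat -> M) (t : term L) :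
  (forall j, P j -> s j = s' j) -> tfree P t -> eval s t = eval s' t.
Proof.
move=> E; elim: t => [n|f a IH] /= H; first exact: E.
by congr interp_fn; apply: functional_extensionality => i; apply: IH.
Qed.

Lemma sat_ext (M : structure L) (q : formula L) : forall (P : nat -> Prop) (s s' : nat -> M),
  (forall j, P j -> s j = s' j) -> ffree P q -> (sat s q <-> sat s' q).
Proof.
elim: q => [t u|r a|q IH|q1 IH1 q2 IH2|k q IH] P s s' E /=.
- by case=> H1 H2; rewrite (eval_ext E H1) (eval_ext E H2).
- move=> H; suff -> : (fun i => eval s (a i)) = (fun i => eval s' (a i)) by [].
  by apply: functional_extensionality => i; apply: eval_ext E (H i).
- by move=> H; have := IH P s s' E H; tauto.
- by case=> H1 H2; have := IH1 P s s' E H1; have := IH2 P s s' E H2; tauto.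
- move=> H; have Ex x : forall j, j = k \/ P j -> upd s k x j = upd s' k x j.
    by move=> j [->|Pj]; rewrite /upd ?eqxx //; case: eqP => // _; apply: E.
  by split=> -[x Hx]; exists x; apply/(IH _ _ _ (Ex x) H).
Qed.

Fixpoint tren (sg : nat -> nat) (t : term L) : term L :=
  match t with
  | Var n => Var (sg n)
  | App f a => App (fun i => tren sg (a i))
  end.

Lemma eval_tren (M : structure L) sg (s : nat -> M) t :
  eval s (tren sg t) = eval (s \o sg) t.
Proof.
elim: t => [n|f a IH] //=; congr interp_fn.
by apply: functional_extensionality => i; apply: IH.
Qed.

(* The bound [b] lets the existential case pick a variable outside the image of [sg]. *)
Lemma rename_formula_in (q : formula L) : forall b (sg : nat -> nat), formula_in b q ->
  exists q', forall (M : structure L) (s : nat -> M), sat s q' <-> sat (s \o sg) q.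
Proof.
rewrite /formula_in; elim: q => [t u|r a|q IH|q1 IH1 q2 IH2|k q IH] b sg /= qb.
- by exists (Equ (tren sg t) (tren sg u)) => M s /=; rewrite !eval_tren.
- exists (Rel (fun i => tren sg (a i))) => M s /=.
  suff -> : (fun i => eval s (tren sg (a i))) = (fun i => eval (s \o sg) (a i)) by [].
  by apply: functional_extensionality => i; apply: eval_tren.
- by have [q' Hq'] := IH b sg qb; exists (Neg q') => M s /=; have := Hq' M s; tauto.
- case: qb => qb1 qb2; have [q1' H1] := IH1 b sg qb1; have [q2' H2] := IH2 b sg qb2.
  by exists (And q1' q2') => M s /=; have := H1 M s; have := H2 M s; tauto.
- pose k' := (\max_(i < b) sg i).+1.
  have qb' : ffree (fun j => j < maxn k.+1 b) q by apply: ffree_mono qb => j [->|]; lia.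
  have [q' Hq'] := IH _ (upd sg k k') qb'.
  exists (Ex k' q') => M s /=.
  have agree x : forall j, j = k \/ j < b -> (upd s k' x \o upd sg k k') j = upd (s \o sg) k x j.
    move=> j [->|jb]; rewrite /= /upd ?eqxx //.
    case: (eqVneq j k) => [_|_]; first by rewrite /= eqxx.
    by rewrite ltn_eqF // ltnS (leq_bigmax (Ordinal jb)).
  split=> -[x Hx]; exists x.
  + exact/(sat_ext (agree x) qb)/Hq'.
  + exact/Hq'/(sat_ext (agree x) qb).
Qed.

Lemma rename_formula (q : formula L) (sg : nat -> nat) :
  exists q', forall (M : structure L) (s : nat -> M), sat s q' <-> sat (s \o sg) q.
Proof. by have [b qb] := formula_bound q; apply: rename_formula_in qb. Qed.

End Syntax.

Lemma upd_same (X : Type) (s : nat -> X) k : upd s k (s k) = s.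
Proof. by apply: functional_extensionality => j; rewrite /upd; case: eqP => [->|]. Qed.

Lemma upd_neq (X : Type) (s : nat -> X) k x j : j != k -> upd s k x j = s j.
Proof. by rewrite /upd => /negbTE ->. Qed.

Section Types.
Variable L : Lang.

Definition same_type (M1 M2 : structure L) n (s : nat -> M1) (t : nat -> M2) : Prop :=
  forall q, formula_in n q -> (sat s q <-> sat t q).

Definition elem_equiv (M1 M2 : structure L) (s : nat -> M1) (t : nat -> M2) : Prop :=
  forall q, sat s q <-> sat t q.

Lemma elem_equiv_comp (M1 M2 : structure L) (s : nat -> M1) (t : nat -> M2) (sg : nat -> nat) :
  elem_equiv s t -> elem_equiv (s \o sg) (t \o sg).
Proof. by move=> st q; have [q' Hq'] := rename_formula q sg; rewrite -Hq' -Hq'. Qed.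

Lemma elem_equiv_eq (M1 M2 : structure L) (s : nat -> M1) (t : nat -> M2) i j :
  elem_equiv s t -> (s i = s j <-> t i = t j).
Proof.
by move=> /(elem_equiv_comp (fun k => if k == 0 then i else j)) /(_ (Equ (Var 0) (Var 1))).
Qed.

Lemma imp_sat (M : structure L) (s : nat -> M) (p q : formula L) :
  sat s (Imp p q) -> sat s p -> sat s q.
Proof. by move=> H Hp; apply: NNPP => Hq; apply: H. Qed.

Variable T : theory L.

Lemma same_type0 (M1 M2 : structure L) (s : nat -> M1) (t : nat -> M2) :
  complete_theory T -> is_model T M1 -> is_model T M2 -> same_type 0 s t.
Proof.
move=> [_ [_ cT]] modM1 modM2 q qin.
have [E|E] := cT q (ffree_mono (fun _ => notF) qin).
  by split=> _; [apply: E M2 modM2 t | apply: E M1 modM1 s].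
by have := E M1 modM1 s; have := E M2 modM2 t => /=; tauto.
Qed.

(* The type of [s] on the first [n.+1] variables is isolated by some [p]; its
   existential closure [Ex n p] transfers to [t] and provides the witness. *)
Lemma same_type_extend (M1 M2 : structure L) n (s : nat -> M1) (t : nat -> M2) :
  atomic T M1 -> is_model T M2 -> same_type n s t ->
  exists y, same_type n.+1 s (upd t n y).
Proof.
move=> [modM1 atM1] modM2 st.
have [p [[pin [_ p_iso]] sp]] := atM1 n.+1 s.
have ex_in : formula_in n (Ex n p) by apply: ffree_mono pin => j /=; lia.
have : sat s (Ex n p) by exists (s n); rewrite upd_same.
move=> /(st _ ex_in) [y ty]; exists y => q qin.
have [E|E] := p_iso q qin;
  by have := imp_sat (E _ modM1 s) sp; have := imp_sat (E _ modM2 _) ty => /=; tauto.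
Qed.

Lemma elem_equiv_extend (M1 M2 : structure L) n (s : nat -> M1) (t : nat -> M2) :
  atomic T M1 -> is_model T M2 -> same_type n s t ->
  exists t', (forall i, i < n -> t' i = t i) /\ elem_equiv s t'.
Proof.
move=> atM1 modM2 st.
pose R ku (y : M2) := same_type ku.1 s ku.2 -> same_type ku.1.+1 s (upd ku.2 ku.1 y).
have [next nextP] : exists next, forall ku, R ku (next ku).
  apply: choice => -[k u]; rewrite /R /=; have [su|nsu] := classic (same_type k s u).
    by have [y Hy] := same_type_extend atM1 modM2 su; exists y.
  by exists (dom_inh M2) => /nsu.
pose u k := iteri k (fun j v => upd v (n + j) (next (n + j, v))) t.
have u_type k : same_type (n + k) s (u k).
  by elim: k => [|k IH]; rewrite ?addn0 // addnS; apply: (nextP (n + k, u k)).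
have u_stable k k' j : k <= k' -> j < n + k -> u k' j = u k j.
  move=> /subnK <- jlt; elim: (k' - k) => [//|d IH].
  by rewrite addSn /= upd_neq ?IH //; apply/eqP; lia.
exists (fun i => u i.+1 i); split=> [i lt|q]; first by rewrite (u_stable 0) ?addn0.
have [b qb] := formula_bound q.
have agree j : j < b -> u j.+1 j = u b j by move=> jb; rewrite (u_stable j.+1) //; lia.
rewrite (sat_ext agree qb); apply: u_type.
by apply: ffree_mono qb => j; lia.
Qed.

Lemma atomic_elem_equiv (M1 M2 : structure L) (s : nat -> M1) :
  complete_theory T -> atomic T M1 -> is_model T M2 -> exists t : nat -> M2, elem_equiv s t.
Proof.
move=> cT atM1 modM2.
have st0 := same_type0 s (fun _ => dom_inh M2) cT atM1.1 modM2.
by have [t [_ st]] := elem_equiv_extend atM1 modM2 st0; exists t.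
Qed.

End Types.

Lemma countable_enum (X : Type) (x0 : X) :
  countable X -> exists g : nat -> X, forall x, exists k, g k = x.
Proof.
move=> [f f_inj].
pose R k (x : X) := (exists x', f x' = k) -> f x = k.
have [g gP] : exists g, forall k, R k (g k).
  apply: choice => k; have [[x fx]|nk] := classic (exists x, f x = k); first by exists x.
  by exists x0 => /nk.
by exists g => x; exists (f x); apply/f_inj/gP; exists x.
Qed.

Lemma seq_covering_image (X Y : Type) (x0 : X) (h : X -> Y) (p : nat -> Y) (y : Y) n :
  countable X ->
  exists B : nat -> Y, [/\ forall i, i < n -> B i = p i, B n = y & forall x, exists i, B i = h x].
Proof.
move=> /(countable_enum x0) [g gP].
exists (fun i => if i < n then p i else if i == n then y else h (g (i - n.+1))).
split=> [i ->||x] //; first by rewrite ltnn eqxx.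
have [k <-] := gP x; exists (n.+1 + k); rewrite addKn.
by case: ifP => [|_]; [lia | case: eqP => [|_]; [lia|]].
Qed.

Section Embeddings.
Variables (L : Lang) (T : theory L).

Lemma not_pseudo_algebraic1_witness (d : formula L) : ~ pseudo_algebraic1 T d ->
  exists (M N' : structure L) (h : M -> N'),
    [/\ countable M, atomic T M, atomic T N' & elem_emb h] /\
    exists c : N', realizes1 c d /\ forall m, h m <> c.
Proof.
move=> npa; apply: NNPP => nw; apply: npa => M N' h cM aM aN' eh _ c dc.
apply: NNPP => c_out; apply: nw; exists M, N', h; split=> //.
by exists c; split=> // m hmc; apply: c_out; exists m.
Qed.

Lemma elem_emb_transfer (M N' N : structure L) (h : M -> N') (B : nat -> N') (A : nat -> N)
    (iota : M -> nat) :
  elem_emb h -> elem_equiv B A -> (forall m, B (iota m) = h m) -> elem_emb (A \o iota).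
Proof.
move=> [h_inj h_el] BA B_iota; split=> [m1 m2 /= E | p s].
  by apply: h_inj; rewrite -!B_iota; apply/(elem_equiv_eq _ _ BA).
rewrite h_el; have -> : h \o s = B \o (iota \o s).
  by apply: functional_extensionality => i /=; rewrite B_iota.
exact: elem_equiv_comp.
Qed.

End Embeddings.

Theorem lemma3p3p2 (L : Lang) (T : theory L) :
  countable_lang L ->
  complete_theory T ->
  (exists M : structure L, atomic T M /\ ~ countable M) ->
  forall d : formula L,
    complete_formula T 1 d ->
    ~ pseudo_algebraic1 T d ->
    forall N : structure L, countable N -> atomic T N ->
    forall e : list N,
      exists (M : structure L) (h : M -> N),
        elem_emb h /\
        (forall x, List.In x e -> exists m : M, h m = x) /\
        exists c : N, (forall m : M, h m <> c) /\ realizes1 c d.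
Proof.
move=> _ cT _ d _ npa N cN aN e.
have [M [N' [h [[cM aM aN' eh] [c [dc c_out]]]]]] := not_pseudo_algebraic1_witness npa.
pose n := List.length e; pose se i := List.nth i e (dom_inh N).
have [te se_te] := atomic_elem_equiv se cT aN aM.1.
have [B [B_te B_c B_cov]] := seq_covering_image (dom_inh M) h (h \o te) c n cM.
have B_se : same_type n B se.
  by move=> q qin; rewrite (sat_ext B_te qin) -eh.2 se_te.
have [A [A_se BA]] := elem_equiv_extend aN' aN.1 B_se.
have [iota B_iota] := choice (fun m i => B i = h m) B_cov.
exists M, (A \o iota); split; first exact: elem_emb_transfer eh BA B_iota.
split=> [x /(List.In_nth _ _ (dom_inh N)) [i [/ltP i_n <-]] |].
  exists (te i); rewrite -/(se i) -A_se //=; apply/(elem_equiv_eq _ _ BA).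
  by rewrite B_iota B_te.
exists (A n); split=> [m E|].
  by apply: (c_out m); rewrite -B_iota -B_c; apply/(elem_equiv_eq _ _ BA).
by apply/(elem_equiv_comp (fun _ => n) BA d); rewrite /comp B_c.
Qed.
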